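(* Let $d\ge 1$ be an integer and let $G$ be a graph that is closed in the $d$-rigidity matroid. Suppose $A,B$ are disjoint vertex subsets each of which induces a clique in $G$, and suppose $G$ contains a matching of $\binom{d+1}{2}$ edges each having one endpoint in $A$ and the other in $B$. Then $A\cup B$ induces a clique in $G$.
   Context: Fix $n$ and a generic $\mathbf p:[n]\to\mathbb R^d$ (its $dn$ coordinates algebraically independent over $\mathbb Q$). For $x\ne y\in[n]$, let $\mathbf r_{xy}\in\mathbb R^{dn}$ be the vector with $(\mathbf p(x)-\mathbf p(y))^T$ in the $d$ coordinates of $x$, $(\mathbf p(y)-\mathbf p(x))^T$ in the $d$ coordinates of $y$, and $0$ elsewhere. The $d$-rigidity closure of a graph $G$ on $[n]$ is the graph $C_d(G)$ with edge set $\{f\in\binom{[n]}2: \mathbf r_f\in\operatorname{span}_{\mathbb R}(\mathbf r_e: e\in G)\}$ (independent of the generic $\mathbf p$). $G$ is closed in the $d$-rigidity matroid if $C_d(G)=G$. *)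

From HB Require Import structures.
From mathcomp Require Import all_boot all_order all_algebra.
From mathcomp Require Import Rstruct.
From mathcomp Require Import mpoly.

Set Implicit Arguments. Unset Strict Implicit. Unset Printing Implicit Defensive.
Import GRing.Theory Num.Theory.
Local Open Scope ring_scope.

(* A configuration p : [n] -> R^d is an n x d real matrix: row v is p(v). *)

(* Genericity: the d*n coordinates of p are algebraically independent over Q,
   i.e. no nonzero rational multivariate polynomial vanishes at them. *)
Definition generic_config (n d : nat) (p : 'M[Rdefinitions.R]_(n, d)) : Prop :=
  forall P : {mpoly rat[n * d]}, P != 0 ->
    mmap ratr (fun k : 'I_(n * d) => mxvec p 0 k) P != 0.

(* The rigidity vector r_xy in R^{dn} (arranged as an n x d matrix):
   row x is p(x)-p(y), row y is p(y)-p(x), other rows are 0. *)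
Definition rig_vec (n d : nat) (p : 'M[Rdefinitions.R]_(n, d)) (x y : 'I_n) : 'M[Rdefinitions.R]_(n, d) :=
  \matrix_(v, i) (if v == x then p x i - p y i
                  else if v == y then p y i - p x i else 0).

Definition simple_graph (n : nat) (G : rel 'I_n) : Prop :=
  (forall x y, G x y = G y x) /\ (forall x, ~~ G x x).

Definition in_rig_span (n d : nat) (p : 'M[Rdefinitions.R]_(n, d)) (G : rel 'I_n) (x y : 'I_n) : bool :=
  (mxvec (rig_vec p x y) <= \sum_(e : 'I_n * 'I_n | G e.1 e.2) <<mxvec (rig_vec p e.1 e.2)>>)%MS.

Definition rig_closure (n d : nat) (p : 'M[Rdefinitions.R]_(n, d)) (G : rel 'I_n) : rel 'I_n :=
  fun x y => (x != y) && in_rig_span p G x y.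

Definition rig_closed (n d : nat) (p : 'M[Rdefinitions.R]_(n, d)) (G : rel 'I_n) : Prop :=
  forall x y, rig_closure p G x y = G x y.

Definition is_clique (n : nat) (G : rel 'I_n) (S : {set 'I_n}) : Prop :=
  forall x y, x \in S -> y \in S -> x != y -> G x y.

From HB Require Import structures.
From mathcomp Require Import all_boot all_order all_algebra.
From mathcomp Require Import Rstruct.
From mathcomp Require Import mpoly.
From mathcomp Require Import ring zify.
Import GRing.Theory Num.Theory.

(* By linear duality, r_xy lies in the span of the edge vectors of G iff every
   infinitesimal motion U of (G, p) has zero strain (U_x - U_y).(p_x - p_y) on xy.
   On a clique containing d + 1 generic, hence affinely independent, points such a
   U agrees with an infinitesimal isometry v |-> v M + t with M skew; on a clique
   with at most one vertex this is trivial.  If (M_A, t_A) and (M_B, t_B) are the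
   isometries on A and on B, the strain on a matching edge ab is
   (p_b D + s).(p_a - p_b) with D = M_A - M_B and s = t_A - t_B.  These C(d+1,2)
   linear forms on the C(d+1,2)-dimensional space of pairs (D skew, s) depend
   polynomially on p and are independent when the matching edges are placed on the
   edges of the standard simplex, hence they are independent for generic p.  So
   D = 0 and s = 0: U is a single isometry on the union of A and B, and therefore
   has zero strain on every pair of its vertices. *)

Local Open Scope ring_scope.

Local Notation RR := Rdefinitions.R.

Lemma trmx11 {R : nmodType} (A : 'M[R]_1) : A^T = A.
Proof. by apply/matrixP => i j; rewrite !ord1 mxE. Qed.

Lemma mul_row_trmxE {R : pzSemiRingType} {n k} (x : 'rV[R]_k) (M : 'M_(n, k)) i :
  (x *m M^T) 0 i = (x *m (row i M)^T) 0 0.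
Proof. by rewrite tr_row colE mulmxA -colE [RHS]mxE. Qed.

Lemma mulmx_trmx_eq0 {R : realFieldType} {n} (y : 'rV[R]_n) : y *m y^T = 0 -> y = 0.
Proof.
move=> /matrixP/(_ 0 0); rewrite !mxE => sum_sq0; apply/rowP => j; rewrite mxE.
have sq_ge0 k : true -> 0 <= y 0 k * y^T k 0 by rewrite mxE -expr2 sqr_ge0.
have /eqP := @psumr_eq0P _ _ _ _ sq_ge0 sum_sq0 j isT.
by rewrite mxE mulf_eq0 orbb => /eqP.
Qed.

Lemma row_free_gram {R : realFieldType} {m c} {K : 'M[R]_(m, c)} :
  row_free K -> row_free (K *m K^T).
Proof.
move=> freeK; apply: inj_row_free => x xKKt0; apply: (row_free_inj freeK).
rewrite /= mul0mx; apply: mulmx_trmx_eq0.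
by rewrite trmx_mul mulmxA -(mulmxA x) xKKt0 mul0mx.
Qed.

Lemma skew_quad_eq0 {R : numFieldType} {d} (M : 'M[R]_d) (x : 'rV_d) :
  M^T = - M -> x *m M *m x^T = 0.
Proof.
move=> skewM; have c_eqN : x *m M *m x^T = - (x *m M *m x^T).
  by rewrite -[LHS]trmx11 !trmx_mul trmxK skewM mulNmx mulmxN mulmxA.
move: c_eqN; set c := _ *m _ => c_eqN; apply/matrixP => i j; rewrite !ord1 [RHS]mxE.
have /eqP : c 0 0 *+ 2 = 0 by rewrite mulr2n {2}c_eqN [X in _ + X]mxE subrr.
by rewrite mulrn_eq0 => /eqP.
Qed.

Section SkewSolution.

Context {F : fieldType} {d : nat} {P V : 'M[F]_d}.
Hypotheses (unitP : P \in unitmx) (PV_skew : V *m P^T + P *m V^T = 0).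

Lemma skew_invmx_mul : (invmx P *m V)^T = - (invmx P *m V).
Proof.
apply/eqP; rewrite -addr_eq0; apply/eqP.
have -> : (invmx P *m V)^T + invmx P *m V =
    invmx P *m (P *m V^T + V *m P^T) *m (invmx P)^T.
  rewrite mulmxDr mulmxDl; congr (_ + _); first by rewrite trmx_mul mulKmx.
  by rewrite !mulmxA -(mulmxA _ P^T) -trmx_mul mulVmx // trmx1 mulmx1.
by rewrite addrC PV_skew mulmx0 mul0mx.
Qed.

Lemma eq_mul_invmx_mul {e f : 'rV[F]_d} :
  f *m P^T + e *m V^T = 0 -> f = e *m (invmx P *m V).
Proof.
move=> fe0; apply/eqP; rewrite -subr_eq0; apply/eqP.
apply: trmx_inj; rewrite linear0 -[_^T](mulKmx unitP) /=.
have -> : P *m (f - e *m (invmx P *m V))^T = (f *m P^T + e *m V^T)^T.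
  rewrite linearB /= trmx_mul skew_invmx_mul mulNmx opprK mulmxDr !mulmxA.
  by rewrite mulmxV // mul1mx linearD /= !trmx_mul !trmxK.
by rewrite fe0 linear0 mulmx0.
Qed.

End SkewSolution.

Lemma sub_sumsmx_annihilator {F : fieldType} {I : finType} (P : pred I) {m}
    (w : I -> 'rV[F]_m) (v : 'rV_m) :
  (forall u : 'cV_m, (forall i, P i -> w i *m u = 0) -> v *m u = 0) ->
  (v <= \sum_(i | P i) <<w i>>)%MS.
Proof.
move=> annih; rewrite submxE; set S := (\sum_(i | P i) _)%MS.
apply/eqP/matrixP => i j; rewrite ord1 [RHS]mxE.
have : col j (v *m cokermx S) = 0.
  rewrite colE -mulmxA -colE; apply: annih => k Pk.
  have /eqP wS0 : w k *m cokermx S == 0 by rewrite -submxE (sumsmx_sup k) // genmxE.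
  by rewrite colE mulmxA wS0 mul0mx.
by move/colP/(_ 0); rewrite [LHS]mxE [RHS]mxE.
Qed.

Lemma leq_card_inj {T T' : finType} {f : T -> T'} {S : {set T'}} :
  injective f -> (forall x, f x \in S) -> (#|T| <= #|S|)%N.
Proof.
move=> f_inj fS; rewrite -cardsT -(card_imset _ f_inj) subset_leq_card //.
by apply/subsetP => _ /imsetP[x _ ->].
Qed.

Lemma bin2S_leq_gt1 {d k} :
  (0 < d)%N -> ('C(d.+1, 2) <= k)%N -> (1 < k)%N -> (d < k)%N.
Proof.
move=> d_gt0; rewrite binS bin1 => le_k lt1k.
have [le_d1 | lt1d] := leqP d 1; first lia.
have : (0 < 'C(d, 2))%N by rewrite bin_gt0.
lia.
Qed.

Lemma enum_ltn_pairs m : exists phi : 'I_('C(m, 2)) -> 'I_m * 'I_m,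
  forall j k : 'I_m, (j < k)%N -> exists i, phi i = (j, k).
Proof.
set T := [set t : 2.-tuple 'I_m | sorted ltn (map val t)].
have cardT : #|T| = 'C(m, 2) := card_ltn_sorted_tuples 2 m.
exists (fun i => let t := enum_val (cast_ord (esym cardT) i) in (tnth t 0, tnth t 1)).
move=> j k lt_jk; have jkT : [tuple j; k] \in T by rewrite inE /= lt_jk.
exists (cast_ord cardT (enum_rank_in jkT [tuple j; k])).
by rewrite /= cast_ordK (enum_rankK_in jkT jkT).
Qed.

Section Motions.

Context {R : numFieldType} {n d : nat}.
Implicit Types (p U : 'M[R]_(n, d)) (S : {set 'I_n}).

(* U is an infinitesimal motion of the framework (G, p) iff [strain p U]
   vanishes on the edges of G. *)
Definition strain p U (x y : 'I_n) : 'M[R]_1 :=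
  (row x U - row y U) *m (row x p - row y p)^T.

Definition trivial_on p U S :=
  exists2 M : 'M[R]_d, M^T = - M &
    exists t : 'rV_d, forall v, v \in S -> row v U = row v p *m M + t.

Lemma strainxx p U x : strain p U x x = 0.
Proof. by rewrite /strain !subrr mul0mx. Qed.

Lemma trivial_on_strain0 p U S :
  trivial_on p U S -> {in S &, forall v w, strain p U v w = 0}.
Proof.
move=> [M skewM [t rowU]] v w vS wS.
by rewrite /strain !rowU // opprD addrACA subrr addr0 -mulmxBl skew_quad_eq0.
Qed.

Lemma trivial_on_le1 p U S : (#|S| <= 1)%N -> trivial_on p U S.
Proof.
move=> /card_le1_eqP S_eq; exists 0; first by rewrite linear0 oppr0.
have [-> | [v0 v0S]] := set_0Vmem S; first by exists 0 => v; rewrite inE.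
by exists (row v0 U) => v vS; rewrite (S_eq v v0) // mulmx0 add0r.
Qed.

Lemma strain_trivial_pair p U {x y} {Mx My : 'M[R]_d} {tx ty : 'rV_d} :
  Mx^T = - Mx -> row x U = row x p *m Mx + tx -> row y U = row y p *m My + ty ->
  strain p U x y = (row y p *m (Mx - My) + (tx - ty)) *m (row x p - row y p)^T.
Proof.
move=> skewMx Ux Uy; rewrite /strain Ux Uy.
have -> : row x p *m Mx + tx - (row y p *m My + ty) =
    (row x p - row y p) *m Mx + (row y p *m (Mx - My) + (tx - ty)).
  rewrite mulmxBl mulmxBr.
  move: (row x p *m Mx) (row y p *m Mx) (row y p *m My) => a b c.
  by apply/rowP => k; rewrite !mxE; ring.
by rewrite mulmxDl skew_quad_eq0 // add0r.
Qed.

Lemma polarization {e f : 'I_n -> 'rV[R]_d} {v w} :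
  f v *m (e v)^T = 0 -> f w *m (e w)^T = 0 ->
  (f v - f w) *m (e v - e w)^T = - (f v *m (e w)^T + f w *m (e v)^T).
Proof.
by move=> fev few; rewrite linearB /= mulmxBl !mulmxBr fev few sub0r subr0 opprD.
Qed.

Definition frame_mx (W : 'M[R]_(n, d)) (q : 'I_d.+1 -> 'I_n) : 'M[R]_d :=
  \matrix_i (row (q (lift ord0 i)) W - row (q ord0) W).

Lemma trivial_on_frame p U S (q : 'I_d.+1 -> 'I_n) :
  (forall i, q i \in S) -> frame_mx p q \in unitmx ->
  {in S &, forall v w, strain p U v w = 0} -> trivial_on p U S.
Proof.
move=> qS unitP strain0; set P := frame_mx p q.
pose e v := row v p - row (q ord0) p; pose f v := row v U - row (q ord0) U.
have polar : {in S &, forall v w, f v *m (e w)^T + f w *m (e v)^T = 0}.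
  move=> v w vS wS; have fe0 u : u \in S -> f u *m (e u)^T = 0.
    by move=> uS; exact: strain0 uS (qS ord0).
  apply/eqP; rewrite -oppr_eq0 -(polarization (fe0 v vS) (fe0 w wS)).
  have -> : (f v - f w) *m (e v - e w)^T = strain p U v w.
    by rewrite /strain /f /e !opprB !addrA !subrK.
  by rewrite strain0.
pose V := \matrix_i f (q (lift ord0 i)).
have row_frame i : row i P = e (q (lift ord0 i)) by rewrite rowK.
have row_vel i : row i V = f (q (lift ord0 i)) by rewrite rowK.
have polar_row v : v \in S -> f v *m P^T + e v *m V^T = 0.
  move=> vS; apply: trmx_inj; rewrite linearD /= !trmx_mul !trmxK linear0.
  apply/row_matrixP => j; rewrite row0 linearD /= !row_mul row_frame row_vel.
  by rewrite -[e _ *m _]trmx11 trmx_mul trmxK addrC polar.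
have VP : V *m P^T + P *m V^T = 0.
  by apply/row_matrixP => i; rewrite row0 linearD /= !row_mul row_vel row_frame polar_row.
exists (invmx P *m V); first exact: skew_invmx_mul.
exists (row (q ord0) U - row (q ord0) p *m (invmx P *m V)) => v vS.
have := eq_mul_invmx_mul unitP VP (polar_row v vS).
rewrite /f /e mulmxBl => /eqP; rewrite subr_eq => /eqP ->.
by rewrite addrAC -addrA.
Qed.

End Motions.

Definition simplex_vertex {R : pzSemiRingType} {d} (j : 'I_d.+1) : 'rV[R]_d :=
  \row_l (j == lift ord0 l)%:R.

Lemma simplex_vertex0 {R : pzSemiRingType} {d} : simplex_vertex ord0 = 0 :> 'rV[R]_d.
Proof. by apply/rowP => l; rewrite !mxE (negbTE (neq_lift _ _)). Qed.

Lemma simplex_vertexS {R : pzSemiRingType} {d} (l : 'I_d) :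
  simplex_vertex (lift ord0 l) = delta_mx 0 l :> 'rV[R]_d.
Proof. by apply/rowP => l'; rewrite !mxE (inj_eq lift_inj) eq_sym. Qed.

Lemma simplex_matching_rigid {R : numFieldType} {d} (D : 'M[R]_d) (s : 'rV_d) :
  D^T = - D ->
  (forall j k : 'I_d.+1, (j < k)%N ->
     ((simplex_vertex j *m D + s) *m (simplex_vertex k - simplex_vertex j)^T) 0 0 = 0) ->
  D = 0 /\ s = 0.
Proof.
move=> skewD rigid.
have s0 : s = 0.
  apply/rowP => l; have := rigid ord0 (lift ord0 l) isT.
  by rewrite simplex_vertex0 mul0mx add0r subr0 simplex_vertexS trmx_delta -colE !mxE.
have diag j : D j j = 0.
  have /matrixP/(_ j j)/eqP := skewD.
  by rewrite !mxE -addr_eq0 -mulr2n mulrn_eq0 => /eqP.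
have upper (j k : 'I_d) : (j < k)%N -> D j k = 0.
  move=> lt_jk; have := rigid (lift ord0 j) (lift ord0 k).
  rewrite /= /bump !leq0n !add1n ltnS => /(_ lt_jk).
  rewrite s0 addr0 !simplex_vertexS -rowE linearB /= mulmxBr !trmx_delta -!colE.
  by rewrite !mxE diag subr0.
split=> //; apply/matrixP => j k; rewrite mxE.
have [lt_jk | lt_kj | /val_inj ->] := ltngtP j k; [exact: upper | | exact: diag].
by have /matrixP/(_ k j) := skewD; rewrite !mxE (upper k j lt_kj) oppr0.
Qed.

Definition config_with {R : nmodType} {n d} {T : finType}
    (f : T -> 'I_n) (r : T -> 'rV[R]_d) : 'M[R]_(n, d) :=
  \matrix_v (if [pick t | v == f t] is Some t then r t else 0).

Lemma row_config_with {R : nmodType} {n d} {T : finType}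
    (f : T -> 'I_n) (r : T -> 'rV[R]_d) t :
  injective f -> row (f t) (config_with f r) = r t.
Proof.
move=> f_inj; rewrite rowK; case: pickP => [t' /eqP/f_inj -> // | /(_ t)].
by rewrite eqxx.
Qed.

Lemma frame_mx_simplex {R : numFieldType} {n d} (q : 'I_d.+1 -> 'I_n) :
  injective q -> frame_mx (config_with q simplex_vertex) q = 1%:M :> 'M[R]_d.
Proof.
move=> q_inj; apply/row_matrixP => i.
by rewrite rowK !row_config_with // simplex_vertexS simplex_vertex0 subr0 row1.
Qed.

Local Notation eval_at W := (mmap (ratr : rat -> RR) (fun k => mxvec W 0 k)).

Definition coord_row {n d} (v : 'I_n) : 'rV[{mpoly rat[n * d]}]_d :=
  \row_k 'X_(mxvec_index v k).

Lemma map_coord_row {n d} (W : 'M[RR]_(n, d)) v :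
  map_mx (eval_at W) (coord_row v) = row v W.
Proof. by apply/rowP => k; rewrite !mxE mmapX mmap1U mxvecE. Qed.

(* The Gram determinant of K is a polynomial that does not vanish at W, hence not
   at the generic p either. *)
Lemma generic_row_free {n d} (p W : 'M[RR]_(n, d)) {m c}
    (K : 'M[{mpoly rat[n * d]}]_(m, c)) :
  generic_config p -> row_free (map_mx (eval_at W) K) -> row_free (map_mx (eval_at p) K).
Proof.
move=> gen freeW; set P := \det (K *m K^T).
have eval_gram W' : eval_at W' P =
    \det (map_mx (eval_at W') K *m (map_mx (eval_at W') K)^T).
  by rewrite map_trmx -map_mxM det_map_mx.
have /row_freeP[C KC1] : row_free (map_mx (eval_at p) K *m (map_mx (eval_at p) K)^T).
  rewrite row_free_unit unitmxE unitfE -eval_gram; apply: gen.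
  apply/eqP => P0; have := row_free_gram freeW.
  by rewrite row_free_unit unitmxE unitfE -eval_gram P0 rmorph0 eqxx.
by apply/row_freeP; exists ((map_mx (eval_at p) K)^T *m C); rewrite mulmxA.
Qed.

Lemma generic_frame_unit {n d} (p : 'M[RR]_(n, d)) (q : 'I_d.+1 -> 'I_n) :
  generic_config p -> injective q -> frame_mx p q \in unitmx.
Proof.
move=> gen q_inj.
pose K : 'M[{mpoly rat[n * d]}]_d :=
  \matrix_i (coord_row (q (lift ord0 i)) - coord_row (q ord0)).
have eval_K (W : 'M_(n, d)) : map_mx (eval_at W) K = frame_mx W q.
  by apply/row_matrixP => i; rewrite -map_row !rowK map_mxB !map_coord_row.
rewrite -row_free_unit -eval_K.
apply: (generic_row_free p (config_with q simplex_vertex)) => //.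
by rewrite eval_K frame_mx_simplex // row_free_unit unitmx1.
Qed.

Lemma generic_trivial_on_clique {n d} (p U : 'M[RR]_(n, d)) (S : {set 'I_n}) :
  (0 < d)%N -> generic_config p -> ('C(d.+1, 2) <= #|S|)%N ->
  {in S &, forall v w, strain p U v w = 0} -> trivial_on p U S.
Proof.
move=> d_gt0 gen leS strain0; have [le1 | lt1] := leqP #|S| 1.
  exact: trivial_on_le1.
have ltdS := bin2S_leq_gt1 d_gt0 leS lt1.
pose q (i : 'I_d.+1) : 'I_n := enum_val (widen_ord ltdS i).
have q_inj : injective q by move=> i j /enum_val_inj /(congr1 val) /= /val_inj.
apply: (trivial_on_frame _ _ _ q) => //; first by move=> i; exact: enum_valP.
exact: generic_frame_unit.
Qed.

(* The matrix, over the coordinates of p as indeterminates, of the linear map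
   (D, s) |-> ((p_(b i) D + s).(p_(a i) - p_(b i)))_i, D + D^T; (D, s) is encoded
   as the row vector [mxvec D, s]. *)
Definition matching_mx {n d m} (a b : 'I_m -> 'I_n) :
    'M[{mpoly rat[n * d]}]_(d * d + d, m + d * d) :=
  block_mx
    (\matrix_i mxvec ((coord_row (b i))^T *m (coord_row (a i) - coord_row (b i))))^T
    (1%:M + lin_mx (@trmx _ d d))
    (\matrix_i (coord_row (a i) - coord_row (b i)))^T 0.

Lemma matching_mx_eval {n d m} (a b : 'I_m -> 'I_n) (W : 'M[RR]_(n, d))
    (D : 'M_d) (s : 'rV_d) :
  row_mx (mxvec D) s *m map_mx (eval_at W) (matching_mx a b) =
  row_mx (\row_i ((row (b i) W *m D + s) *m (row (a i) W - row (b i) W)^T) 0 0)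
         (mxvec (D + D^T)).
Proof.
rewrite /matching_mx map_block_mx mul_row_block; congr row_mx.
  apply/rowP => i; rewrite -!map_trmx [RHS]mxE [LHS]mxE !(mul_row_trmxE _ _ i).
  rewrite -!map_row !rowK.
  have eval_diff : map_mx (eval_at W) (coord_row (a i) - coord_row (b i)) =
      row (a i) W - row (b i) W.
    by rewrite map_mxB !map_coord_row.
  have eval_outer : map_mx (eval_at W)
        (mxvec ((coord_row (b i))^T *m (coord_row (a i) - coord_row (b i)))) =
      mxvec ((row (b i) W)^T *m (row (a i) W - row (b i) W)).
    rewrite map_mxvec map_mxM -map_trmx; congr (mxvec (_^T *m _)).
      exact: map_coord_row.
    exact: eval_diff.
  rewrite eval_outer eval_diff mulmxDl [RHS]mxE.
  by rewrite -[mxvec D *m _]trmx11 trmx_mul trmxK mxvec_dotmul.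
rewrite map_mx0 mulmx0 addr0 map_mxD map_mx1 (map_lin_mx (gf := trmx)).
  by rewrite mulmxDr mulmx1 mul_vec_lin [RHS]linearD.
by move=> A; rewrite map_trmx.
Qed.

Lemma generic_matching_rigid {n d} (p : 'M[RR]_(n, d)) (a b : 'I_('C(d.+1, 2)) -> 'I_n) :
  generic_config p -> injective a -> injective b -> (forall i j, a i != b j) ->
  forall (D : 'M_d) (s : 'rV_d), D^T = - D ->
  (forall i, (row (b i) p *m D + s) *m (row (a i) p - row (b i) p)^T = 0) ->
  D = 0 /\ s = 0.
Proof.
move=> gen a_inj b_inj a_neq_b; have [phi phi_onto] := enum_ltn_pairs d.+1.
pose ab t : 'I_n := match t with inl i => a i | inr i => b i end.
have ab_inj : injective ab.
  case=> i [] j /= eq_ij; first by rewrite (a_inj _ _ eq_ij).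
  - by have := a_neq_b i j; rewrite eq_ij eqxx.
  - by have := a_neq_b j i; rewrite eq_ij eqxx.
  by rewrite (b_inj _ _ eq_ij).
pose W : 'M[RR]_(n, d) := config_with ab (fun t => match t with
  | inl i => simplex_vertex (phi i).2 | inr i => simplex_vertex (phi i).1 end).
have Wa i : row (a i) W = simplex_vertex (phi i).2 := row_config_with _ _ (inl i) ab_inj.
have Wb i : row (b i) W = simplex_vertex (phi i).1 := row_config_with _ _ (inr i) ab_inj.
have freeW : row_free (map_mx (eval_at W) (matching_mx a b)).
  apply: inj_row_free => x; rewrite -(hsubmxK x) -(vec_mxK (lsubmx x)).
  move: (vec_mx _) (rsubmx x) => D s; rewrite matching_mx_eval -row_mx0.
  move=> /eq_row_mx[rigid0 skew0].
  have skewD : D^T = - D by apply/eqP; rewrite -addr_eq0 addrC -mxvec_eq0 skew0.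
  suff [-> ->] : D = 0 /\ s = 0 by rewrite linear0 row_mx0.
  apply: (simplex_matching_rigid _ _ skewD) => j k lt_jk.
  have [i phi_i] := phi_onto j k lt_jk.
  move/rowP/(_ i): rigid0 => rigid_i.
  by rewrite [LHS]mxE [RHS]mxE Wa Wb phi_i in rigid_i.
move=> D s skewD rigid; have freep := generic_row_free p W _ gen freeW.
have : row_mx (mxvec D) s *m map_mx (eval_at p) (matching_mx a b) = 0.
  rewrite matching_mx_eval skewD subrr linear0 -row_mx0; congr row_mx.
  by apply/rowP => i; rewrite [LHS]mxE rigid [RHS]mxE mxE.
move/eqP; rewrite mulmx_free_eq0 // row_mx_eq0 mxvec_eq0.
by move=> /andP[/eqP -> /eqP ->].
Qed.

Lemma generic_trivial_on_union {n d} (p U : 'M[RR]_(n, d)) (A B : {set 'I_n})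
    (a b : 'I_('C(d.+1, 2)) -> 'I_n) :
  generic_config p -> injective a -> injective b ->
  (forall i, a i \in A) -> (forall i, b i \in B) -> [disjoint A & B] ->
  trivial_on p U A -> trivial_on p U B -> (forall i, strain p U (a i) (b i) = 0) ->
  trivial_on p U (A :|: B).
Proof.
move=> gen a_inj b_inj aA bB AB [MA skewA [tA UA]] [MB skewB [tB UB]] strain0.
have a_neq_b i j : a i != b j.
  by apply: contraTneq (bB j) => <-; rewrite (disjointFr AB (aA i)).
have [|i|/subr0_eq eqM /subr0_eq eqt] :=
  generic_matching_rigid p a b gen a_inj b_inj a_neq_b (MA - MB) (tA - tB).
- by rewrite linearB /= skewA skewB opprK opprB addrC.
- by rewrite -(strain_trivial_pair p U skewA (UA _ (aA i)) (UB _ (bB i))).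
exists MA => //; exists tA => v; rewrite inE => /orP[/UA // | /UB ->].
by rewrite eqM eqt.
Qed.

Lemma rig_vec_outer {n d} (p : 'M[RR]_(n, d)) x y :
  rig_vec p x y = (delta_mx 0 x - delta_mx 0 y)^T *m (row x p - row y p).
Proof.
apply/matrixP => v i; rewrite !mxE big_ord1 !mxE eqxx /=.
case: (v =P x) => [-> | _].
  by case: (x =P y) => [-> | _]; rewrite ?subrr ?mulr0 // subr0 mul1r.
rewrite sub0r; case: (v =P y) => [_ | _]; first by rewrite mulN1r opprB.
by rewrite mulr0n oppr0 mul0r.
Qed.

Lemma rig_vec_dot {n d} (p U : 'M[RR]_(n, d)) x y :
  mxvec (rig_vec p x y) *m (mxvec U)^T = strain p U x y.
Proof. by rewrite rig_vec_outer mxvec_dotmul mulmxBl -!rowE. Qed.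

Lemma in_rig_span_motions {n d} (p : 'M[RR]_(n, d)) (G : rel 'I_n) x y :
  (forall U, (forall v w, G v w -> strain p U v w = 0) -> strain p U x y = 0) ->
  in_rig_span p G x y.
Proof.
move=> motion; apply: sub_sumsmx_annihilator => u u_perp.
have dotE v w : mxvec (rig_vec p v w) *m u = strain p (vec_mx u^T) v w.
  by rewrite -rig_vec_dot vec_mxK trmxK.
by rewrite dotE; apply: motion => v w Gvw; rewrite -dotE; exact: u_perp (v, w) Gvw.
Qed.

Theorem claim2p4 (n d : nat) (p : 'M[Rdefinitions.R]_(n, d)) (G : rel 'I_n)
  (A B : {set 'I_n}) (a b : 'I_('C(d.+1, 2)) -> 'I_n) :
  (0 < d)%N ->
  generic_config p ->
  simple_graph G ->
  rig_closed p G ->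
  [disjoint A & B] ->
  is_clique G A ->
  is_clique G B ->
  injective a -> injective b ->
  (forall i, a i \in A) -> (forall i, b i \in B) ->
  (forall i, G (a i) (b i)) ->
  is_clique G (A :|: B).
Proof.
move=> d_gt0 gen _ closedG AB cliqueA cliqueB a_inj b_inj aA bB Gab.
have clique_strain0 S U : is_clique G S ->
    (forall v w, G v w -> strain p U v w = 0) -> {in S &, forall v w, strain p U v w = 0}.
  move=> cliqueS motion v w vS wS; have [-> | neq_vw] := eqVneq v w.
    exact: strainxx.
  exact/motion/cliqueS.
have motion_trivial U : (forall v w, G v w -> strain p U v w = 0) ->
    trivial_on p U (A :|: B).
  move=> motion.
  apply: (generic_trivial_on_union p U A B a b gen a_inj b_inj aA bB AB).
  - apply: (generic_trivial_on_clique p U A d_gt0 gen _ (clique_strain0 _ _ cliqueA motion)).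
    by rewrite -[X in (X <= _)%N]card_ord (leq_card_inj a_inj aA).
  - apply: (generic_trivial_on_clique p U B d_gt0 gen _ (clique_strain0 _ _ cliqueB motion)).
    by rewrite -[X in (X <= _)%N]card_ord (leq_card_inj b_inj bB).
  - by move=> i; apply: motion.
move=> x y xAB yAB neq_xy; rewrite -closedG /rig_closure neq_xy /=.
by apply: in_rig_span_motions => U /motion_trivial /trivial_on_strain0; apply.
Qed.
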